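(* Let $k\ge 2$ and $m\ge 1$ be integers, let $x=\zeta_k=e^{2\pi\sqrt{-1}/k}$, and let $H\in \mathrm{BH}(mk,k)$ be such that its first $k$ rows form the $k\times mk$ matrix $F_k\otimes j_m$. Partition these first $k$ rows into the $k$ consecutive $k\times m$ blocks $B_1,\dots,B_k$ (block $B_\ell$ consisting of columns $(\ell-1)m+1,\dots,\ell m$). Then for any choice of elements $c_1,\dots,c_k\in\langle x\rangle$, the matrix $K$ obtained from $H$ by replacing each block $B_\ell$ by $c_\ell B_\ell$ (and leaving all other entries unchanged) is also in $\mathrm{BH}(mk,k)$.
   Context: For $k\ge 1$, $\zeta_k=e^{2\pi\sqrt{-1}/k}$ and $\langle \zeta_k\rangle$ is the set of all $k$-th roots of unity. A complex Hadamard matrix of order $n$ is an $n\times n$ matrix $H$ with all entries of modulus $1$ and $HH^{\ast}=nI_n$. $\mathrm{BH}(n,k)$ denotes the set of $n\times n$ complex Hadamard matrices all of whose entries lie in $\langle\zeta_k\rangle$ (Butson Hadamard matrices). $F_k=[\zeta_k^{(i-1)(j-1)}]_{1\le i,j\le k}$ is the $k\times k$ Fourier matrix, $j_m$ denotes the all-ones row vector of length $m$, and $\otimes$ is the Kronecker product, $A\otimes B=[a_{ij}B]$. *)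

From mathcomp Require Import all_boot all_order all_algebra.
From mathcomp Require Import all_classical all_reals all_analysis.
From mathcomp Require Export complex.
Set Implicit Arguments.
Unset Strict Implicit.
Unset Printing Implicit Defensive.
Import Order.TTheory GRing.Theory Num.Theory.
Local Open Scope ring_scope.
Local Open Scope complex_scope.

Definition zeta (R : realType) (k : nat) : R[i] :=
  (cos (2 * pi / k%:R)) +i* (sin (2 * pi / k%:R)).

(* membership in <zeta_k>, the set of all k-th roots of unity *)
Definition kth_root (R : realType) (k : nat) (c : R[i]) : Prop := c ^+ k = 1.

Definition adjmx (R : realType) (m n : nat) (A : 'M[R[i]]_(m, n)) : 'M[R[i]]_(n, m) :=
  (map_mx (@conjc R) A)^T.

Definition complex_hadamard (R : realType) (n : nat) (H : 'M[R[i]]_n) : Prop :=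
  (forall i j, `|H i j| = 1) /\ H *m adjmx H = n%:R%:M.

Definition BH (R : realType) (n k : nat) (H : 'M[R[i]]_n) : Prop :=
  complex_hadamard H /\ (forall i j, kth_root k (H i j)).

(* Rows 0..k-1 of H (0-indexed) equal F_k (x) j_m:
   entry (a, j) = zeta_k^(a * (j / m)). *)
Definition first_rows_Fk_jm (R : realType) (m k : nat) (H : 'M[R[i]]_(m * k)) : Prop :=
  forall (a j : 'I_(m * k)), (a < k)%N -> H a j = zeta R k ^+ (a * (j %/ m))%N.

(* K: multiply block B_l (rows 0..k-1, columns l*m .. l*m+m-1, 0-indexed l)
   by c l, leave all other entries unchanged. *)
Definition scale_blocks (R : realType) (m k : nat) (c : nat -> R[i])
  (H : 'M[R[i]]_(m * k)) : 'M[R[i]]_(m * k) :=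
  \matrix_(a, j) (if (a < k)%N then c (j %/ m)%N * H a j else H a j).

From mathcomp Require Import all_boot all_order all_algebra.
From mathcomp Require Import all_classical all_reals all_analysis.
From mathcomp Require Import complex.

(* Write z for zeta_k, so that row a < k of H is j |-> (z^a)^(j %/ m); no other
   property of zeta_k is needed. Rows of a complex Hadamard matrix are pairwise
   orthogonal, hence pairwise different, so z^0, ..., z^(k-1) are pairwise
   distinct. For a row r >= k, orthogonality to the first k rows says that the
   polynomial of degree < k whose l-th coefficient is the conjugated sum of row r
   over block l vanishes at these k points; so every row below the first k sums
   to zero on each block. Hence scaling the blocks of the first k rows keeps
   their inner products with the lower rows equal to 0, and changes inner
   products among the first k rows termwise by the factors |c_l|^2 = 1:
   K K^* = H H^*. *)

Set Implicit Arguments.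
Unset Strict Implicit.
Import GRing.Theory Num.Theory.
Local Open Scope ring_scope.

Section Blocks.
Variables m k : nat.
Hypothesis m_gt0 : (0 < m)%N.

Lemma ltn_divn_ord (j : 'I_(m * k)) : (j %/ m < k)%N.
Proof. by rewrite ltn_divLR // [(k * m)%N]mulnC. Qed.

Lemma sum_blocks_mul (F : pzSemiRingType) (f : nat -> F) (u : 'I_(m * k) -> F) :
  \sum_(j < m * k) f (j %/ m)%N * u j =
  \sum_(l < k) f l * \sum_(j < m * k | (j %/ m)%N == l) u j.
Proof.
rewrite (partition_big (fun j => Ordinal (ltn_divn_ord j)) xpredT) //=.
by apply: eq_bigr => l _; rewrite mulr_sumr; apply: eq_big => // j /eqP <-.
Qed.

Lemma sum_blocks_eq0 (F : pzSemiRingType) (f : nat -> F) (u : 'I_(m * k) -> F) :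
  (forall l : 'I_k, \sum_(j < m * k | (j %/ m)%N == l) u j = 0) ->
  \sum_(j < m * k) f (j %/ m)%N * u j = 0.
Proof. by move=> u0; rewrite sum_blocks_mul big1 // => l _; rewrite u0 mulr0. Qed.

Lemma block_sums_eq0 (F : idomainType) (w : 'I_k -> F) (u : 'I_(m * k) -> F) :
  injective w -> (forall a, \sum_(j < m * k) w a ^+ (j %/ m) * u j = 0) ->
  forall l : 'I_k, \sum_(j < m * k | (j %/ m)%N == l) u j = 0.
Proof.
move=> w_inj u_orth l.
pose p := \poly_(l < k) \sum_(j < m * k | (j %/ m)%N == l) u j.
have p_root a : root p (w a).
  apply/eqP; rewrite horner_poly -[RHS](u_orth a) sum_blocks_mul.
  by apply: eq_bigr => i _; rewrite mulrC.
have p0 : p = 0.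
  apply: (@roots_geq_poly_eq0 _ _ (map w (enum 'I_k))).
  - by apply/allP => _ /mapP[a _ ->].
  - by rewrite map_inj_uniq ?enum_uniq.
  - by rewrite size_map size_enum_ord size_poly.
by move/polyP: p0 => /(_ l); rewrite coef_poly ltn_ord coef0.
Qed.

End Blocks.

Lemma mul_adjmxE (R : realType) (p q r : nat)
    (A : 'M[R[i]]_(p, q)) (B : 'M[R[i]]_(r, q)) a b :
  (A *m adjmx B) a b = \sum_j A a j * conjc (B b j).
Proof. by rewrite !mxE; apply: eq_bigr => j _; rewrite !mxE. Qed.

Lemma kth_root_norm1 (R : realType) (k : nat) (x : R[i]) :
  (0 < k)%N -> kth_root k x -> `|x| = 1.
Proof.
move=> k_gt0 xk; apply/eqP; rewrite -(pexpr_eq1 k_gt0) ?normr_ge0 //.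
by rewrite -normrX xk normr1.
Qed.

Section ComplexHadamard.
Variables (R : realType) (n : nat) (H : 'M[R[i]]_n).
Hypothesis H_had : complex_hadamard H.

Lemma hadamard_dot a b : \sum_j H a j * conjc (H b j) = n%:R *+ (a == b).
Proof. by rewrite -mul_adjmxE H_had.2 mxE. Qed.

Lemma hadamard_orth a b : a != b -> \sum_j H a j * conjc (H b j) = 0.
Proof. by move=> /negbTE ab; rewrite hadamard_dot ab. Qed.

Lemma hadamard_row_inj a b : (forall j, H a j = H b j) -> a = b.
Proof.
move=> Hab; apply/eqP; have := hadamard_dot a b.
rewrite (eq_bigr (fun => 1)) => [|j _]; last first.
  by rewrite -Hab -sqr_normc H_had.1 expr1n.
rewrite sumr_const card_ord; case: eqP => // _ /eqP.
by rewrite mulr0n pnatr_eq0 eqn0Ngt (leq_ltn_trans (leq0n a) (ltn_ord a)).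
Qed.

End ComplexHadamard.

Section ScaleBlocks.
Variables (R : realType) (k m : nat) (H : 'M[R[i]]_(m * k)) (c : nat -> R[i]).
Hypotheses (k_gt0 : (0 < k)%N) (m_gt0 : (0 < m)%N).
Hypotheses (H_had : complex_hadamard H) (H_Fk : first_rows_Fk_jm H).
Hypothesis c_root : forall l, (l < k)%N -> kth_root k (c l).

Let k_le_mk : (k <= m * k)%N := leq_pmull k m_gt0.

Lemma first_rowsE (a j : 'I_(m * k)) :
  (a < k)%N -> H a j = (zeta R k ^+ a) ^+ (j %/ m).
Proof. by move=> ak; rewrite H_Fk // exprM. Qed.

Lemma zeta_expr_inj : injective (fun a : 'I_k => zeta R k ^+ a).
Proof.
move=> a b zab; apply: val_inj.
have /(congr1 val) // : widen_ord k_le_mk a = widen_ord k_le_mk b.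
by apply: (hadamard_row_inj H_had) => j; rewrite !first_rowsE //= zab.
Qed.

Lemma lower_row_conj_block_sums_eq0 (r : 'I_(m * k)) (l : 'I_k) : (k <= r)%N ->
  \sum_(j < m * k | (j %/ m)%N == l) conjc (H r j) = 0.
Proof.
move=> kr; apply: (block_sums_eq0 m_gt0 zeta_expr_inj) => a.
have ar : widen_ord k_le_mk a != r.
  by rewrite -val_eqE neq_ltn /= (leq_trans (ltn_ord a) kr).
rewrite -[RHS](hadamard_orth H_had ar).
by apply: eq_bigr => j _; rewrite (first_rowsE (a := widen_ord _ a)) //=.
Qed.

Lemma lower_row_block_sums_eq0 (r : 'I_(m * k)) (l : 'I_k) : (k <= r)%N ->
  \sum_(j < m * k | (j %/ m)%N == l) H r j = 0.
Proof.
move=> kr; under eq_bigr do rewrite -[H r _]conjcK.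
by rewrite -rmorph_sum lower_row_conj_block_sums_eq0 // rmorph0.
Qed.

Lemma scale_blocks_dot a b :
  \sum_j scale_blocks c H a j * conjc (scale_blocks c H b j) =
  \sum_j H a j * conjc (H b j).
Proof.
have blk_lt (j : 'I_(m * k)) := ltn_divn_ord m_gt0 j.
under eq_bigr do rewrite !mxE.
case: (ltnP a k) => ak; case: (ltnP b k) => bk //.
- apply: eq_bigr => j _; rewrite rmorphM mulrACA -sqr_normc.
  by rewrite (kth_root_norm1 k_gt0 (c_root (blk_lt j))) expr1n mul1r.
- have ab : a != b by rewrite -val_eqE neq_ltn (leq_trans ak bk).
  rewrite (hadamard_orth H_had ab).
  under eq_bigr do rewrite first_rowsE //.
  apply: (sum_blocks_eq0 m_gt0 (fun l => c l * _ ^+ l)) => l.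
  exact: lower_row_conj_block_sums_eq0.
- have ab : a != b by rewrite -val_eqE neq_ltn (leq_trans bk ak) orbT.
  rewrite (hadamard_orth H_had ab).
  under eq_bigr do rewrite [H b _]first_rowsE // mulrC.
  apply: (sum_blocks_eq0 m_gt0 (fun l => conjc (c l * _ ^+ l))) => l.
  exact: lower_row_block_sums_eq0.
Qed.

End ScaleBlocks.

Theorem proposition5p1 (R : realType) (k m : nat) (hk : (2 <= k)%N) (hm : (1 <= m)%N)
  (H : 'M[R[i]]_(m * k)) (c : nat -> R[i]) :
  @BH R (m * k) k H -> @first_rows_Fk_jm R m k H ->
  (forall l, (l < k)%N -> @kth_root R k (c l)) ->
  @BH R (m * k) k (@scale_blocks R m k c H).
Proof.
move=> [H_had H_root] H_Fk c_root.
have k_gt0 : (0 < k)%N := ltnW hk.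
have blk_lt (j : 'I_(m * k)) := ltn_divn_ord hm j.
split; first split.
- move=> a j; rewrite mxE; case: ifP => _; last exact: H_had.1.
  by rewrite normrM H_had.1 (kth_root_norm1 k_gt0 (c_root _ (blk_lt j))) mulr1.
- apply/matrixP => a b.
  by rewrite -H_had.2 !mul_adjmxE (scale_blocks_dot k_gt0 hm H_had H_Fk c_root).
- move=> a j; rewrite /kth_root mxE; case: ifP => _; last exact: H_root.
  by rewrite exprMn c_root ?H_root ?mulr1.
Qed.
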